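(* Let $A=D[X,Y;\sigma,a]$ be a generalized Weyl algebra of rank $n$, where $D$ is a $K$-algebra, and let $\Delta=\{\mathrm{ad}_{X_1},\dots,\mathrm{ad}_{X_n}\}$ and $\Delta'=\{\mathrm{ad}_{Y_1},\dots,\mathrm{ad}_{Y_n}\}$. Then: (1) $A$ is a $\Delta$-locally nilpotent algebra if and only if the maps $\sigma_1-1,\dots,\sigma_n-1$ are locally nilpotent maps on $D$. (2) $A$ is a $\Delta'$-locally nilpotent algebra if and only if the maps $\sigma_1^{-1}-1,\dots,\sigma_n^{-1}-1$ are locally nilpotent maps on $D$.
   Context: Let $\sigma=(\sigma_1,\dots,\sigma_n)$ be commuting automorphisms of $D$ and $a=(a_1,\dots,a_n)$ elements of the centre of $D$ with $\sigma_i(a_j)=a_j$ for $i\ne j$. The generalized Weyl algebra $D[X,Y;\sigma,a]$ is the ring generated by $D$ and $X_1,\dots,X_n,Y_1,\dots,Y_n$ subject to $Y_iX_i=a_i$, $X_iY_i=\sigma_i(a_i)$, $X_id=\sigma_i(d)X_i$, $Y_id=\sigma_i^{-1}(d)Y_i$ ($d\in D$), and $[X_i,X_j]=[X_i,Y_j]=[Y_i,Y_j]=0$ for $i\ne j$. $\mathrm{ad}_x(f)=xf-fx$. For $i\ge1$, $\Delta^i=\{\delta_1\cdots\delta_i\mid\delta_j\in\Delta\}$; $A$ is $\Delta$-locally nilpotent if every $f\in A$ satisfies $\Delta^{i}f=0$ for some $i\ge1$. A map $g$ is locally nilpotent on $D$ if for every $d\in D$ there is $m$ with $g^m(d)=0$.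 *)

From HB Require Import structures.
From mathcomp Require Import all_boot all_order all_algebra.
Set Implicit Arguments. Unset Strict Implicit. Unset Printing Implicit Defensive.
Import GRing.Theory.
Local Open Scope ring_scope.

Definition is_alg_hom (K : fieldType) (A B : algType K) (f : A -> B) : Prop :=
  [/\ forall x y, f (x + y) = f x + f y,
      forall x y, f (x * y) = f x * f y,
      f 1 = 1 &
      forall (k : K) x, f (k *: x) = k *: f x].

Definition gwa_data (K : fieldType) (D : algType K) (n : nat)
  (sigma sigmainv : 'I_n -> D -> D) (a : 'I_n -> D) : Prop :=
  [/\ forall i, is_alg_hom (sigma i),
      forall i, cancel (sigma i) (sigmainv i) /\ cancel (sigmainv i) (sigma i),
      forall i j d, sigma i (sigma j d) = sigma j (sigma i d),
      forall i d, a i * d = d * a i &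
      forall i j, i != j -> sigma i (a j) = a j].

Definition gwa_relations (K : fieldType) (D : algType K) (n : nat)
  (sigma sigmainv : 'I_n -> D -> D) (a : 'I_n -> D)
  (B : algType K) (phi : D -> B) (x y : 'I_n -> B) : Prop :=
  is_alg_hom phi /\
  [/\ forall i, y i * x i = phi (a i),
      forall i, x i * y i = phi (sigma i (a i)),
      forall i d, x i * phi d = phi (sigma i d) * x i,
      forall i d, y i * phi d = phi (sigmainv i d) * y i &
      forall i j, i != j ->
        [/\ x i * x j = x j * x i, x i * y j = y j * x i & y i * y j = y j * y i]].

(* (A, iota, X, Y) is the generalized Weyl algebra D[X,Y;sigma,a]: the K-algebra
   generated by D and X_i, Y_i subject to the relations, i.e. the initial
   object among K-algebras equipped with such data (universal property of the
   presentation). *)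
Definition is_GWA (K : fieldType) (D : algType K) (n : nat)
  (sigma sigmainv : 'I_n -> D -> D) (a : 'I_n -> D)
  (A : algType K) (iota : D -> A) (X Y : 'I_n -> A) : Prop :=
  gwa_relations sigma sigmainv a iota X Y /\
  forall (B : algType K) (phi : D -> B) (x y : 'I_n -> B),
    gwa_relations sigma sigmainv a phi x y ->
    (exists f : A -> B, [/\ is_alg_hom f, forall d, f (iota d) = phi d,
                            forall i, f (X i) = x i & forall i, f (Y i) = y i]) /\
    (forall f g : A -> B,
       is_alg_hom f -> is_alg_hom g ->
       (forall d, f (iota d) = phi d) -> (forall d, g (iota d) = phi d) ->
       (forall i, f (X i) = x i) -> (forall i, g (X i) = x i) ->
       (forall i, f (Y i) = y i) -> (forall i, g (Y i) = y i) ->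
       forall u, f u = g u).

Definition ad (R : ringType) (x : R) (f : R) : R := x * f - f * x.

(* A is Delta-locally nilpotent for Delta = {ad_{Z_1},...,ad_{Z_n}}:
   every f is killed by Delta^i for some i >= 1, i.e. by every product
   delta_1 ... delta_i of i elements of Delta. *)
Definition ad_locally_nilpotent (R : ringType) (n : nat) (Z : 'I_n -> R) : Prop :=
  forall f : R, exists i : nat, (1 <= i)%N /\
    forall s : seq 'I_n, size s = i -> foldr (fun j g => ad (Z j) g) f s = 0.

Definition locally_nilpotent_map (R : ringType) (g : R -> R) : Prop :=
  forall d : R, exists m : nat, iter m g d = 0.

From HB Require Import structures.
From mathcomp Require Import all_boot all_order all_algebra.
From mathcomp Require Import boolp.
Set Implicit Arguments. Unset Strict Implicit. Unset Printing Implicit Defensive.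
Import GRing.Theory.
Local Open Scope ring_scope.

(* By induction on m, ad_{X_i}^m (iota d) = iota ((sigma_i - 1)^m d) X_i^m.
   Letting A act on D (iota d by left multiplication, X_i by sigma_i, Y_i by
   a_i sigma_i^-1) and evaluating at sigma_i^-m(1) shows that this product
   vanishes only if (sigma_i - 1)^m d = 0; hence ad_X-local nilpotence forces
   each sigma_i - 1 to be locally nilpotent.  Conversely, by the Leibniz rule the
   ad_X-nilpotent elements form a subalgebra.  It contains the pairwise commuting
   X_j, the Y_j because [X_j, Y_j] = iota (sigma_j(a_j) - a_j), and every iota d,
   by induction on the nilpotency indices of d under the commuting maps
   sigma_i - 1, since [X_j, iota d] = iota ((sigma_j - 1) d) X_j.  As A is
   generated by these elements, the subalgebra is A.
   Part (2) is part (1) for the same algebra presented over (sigma^-1, sigma(a))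
   with the roles of X and Y exchanged. *)

Section AlgHom.
Variables (K : fieldType) (A B : algType K) (f : A -> B).
Hypothesis f_hom : is_alg_hom f.

Lemma alg_homD x y : f (x + y) = f x + f y. Proof. by case: f_hom. Qed.
Lemma alg_homM x y : f (x * y) = f x * f y. Proof. by case: f_hom. Qed.
Lemma alg_hom1 : f 1 = 1. Proof. by case: f_hom. Qed.
Lemma alg_homZ k x : f (k *: x) = k *: f x. Proof. by case: f_hom. Qed.
Lemma alg_hom0 : f 0 = 0.
Proof. by apply: (addrI (f 0)); rewrite -alg_homD !addr0. Qed.
Lemma alg_homB x y : f (x - y) = f x - f y.
Proof. by apply: (addIr (f y)); rewrite -alg_homD !subrK. Qed.
Lemma alg_homX x m : f (x ^+ m) = f x ^+ m.
Proof. by elim: m => [|m IH]; rewrite ?expr0 ?alg_hom1 // !exprS alg_homM IH. Qed.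
Lemma alg_hom_linear : linear f.
Proof. by move=> k x y; rewrite alg_homD alg_homZ. Qed.

End AlgHom.

Lemma alg_hom_comp (K : fieldType) (A B C : algType K) (f : A -> B) (g : B -> C) :
  is_alg_hom g -> is_alg_hom f -> is_alg_hom (g \o f).
Proof.
move=> g_hom f_hom; split=> [x y|x y||k x] /=.
- by rewrite (alg_homD f_hom) (alg_homD g_hom).
- by rewrite (alg_homM f_hom) (alg_homM g_hom).
- by rewrite (alg_hom1 f_hom) (alg_hom1 g_hom).
- by rewrite (alg_homZ f_hom) (alg_homZ g_hom).
Qed.

Lemma alg_hom_can (K : fieldType) (A : algType K) (f g : A -> A) :
  is_alg_hom f -> cancel f g -> cancel g f -> is_alg_hom g.
Proof.
move=> f_hom fK gK; split=> [x y|x y||k x]; apply: (can_inj fK);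
  by rewrite ?(alg_homD f_hom) ?(alg_homM f_hom) ?(alg_hom1 f_hom) ?(alg_homZ f_hom) ?gK.
Qed.

Section Endomorphisms.
Variables (K : comPzRingType) (V : algType K).

Record endo := Endo { endo_fun :> V -> V; endo_linear : linear endo_fun }.

HB.instance Definition _ (e : endo) :=
  GRing.isLinear.Build K V V *:%R (endo_fun e) (endo_linear e).

Lemma endoP (e1 e2 : endo) : e1 =1 e2 -> e1 = e2.
Proof.
case: e1 e2 => [f1 lin1] [f2 lin2] /funext /= eq12; subst f2.
by rewrite (Prop_irrelevance lin1 lin2).
Qed.

HB.instance Definition _ := gen_eqMixin endo.
HB.instance Definition _ := gen_choiceMixin endo.

Definition endo0 : endo := Endo (linearP (\0 : V -> V)).
Definition endo_opp (e : endo) : endo := Endo (linearP (\- e)).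
Definition endo_add (e1 e2 : endo) : endo := Endo (linearP (e1 \+ e2)).
Definition endo1 : endo := Endo (linearP (@idfun V)).
Definition endo_mul (e1 e2 : endo) : endo := Endo (linearP (e1 \o e2)).

Lemma endo_scale_linear (k : K) (e : endo) : linear (fun v => k *: e v).
Proof. by move=> c u v; rewrite linearP scalerDr !scalerA mulrC. Qed.
Definition endo_scale (k : K) (e : endo) : endo := Endo (endo_scale_linear k e).

Lemma endo1_neq0 : endo1 != endo0.
Proof. by apply/eqP => /(congr1 (fun e : endo => e 1)) /eqP; rewrite oner_eq0. Qed.

Fact endo_addA : associative endo_add.
Proof. by move=> ? ? ?; apply: endoP => v /=; rewrite addrA. Qed.
Fact endo_addC : commutative endo_add.
Proof. by move=> ? ?; apply: endoP => v /=; rewrite addrC. Qed.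
Fact endo_add0 : left_id endo0 endo_add.
Proof. by move=> ?; apply: endoP => v /=; rewrite add0r. Qed.
Fact endo_addN : left_inverse endo0 endo_opp endo_add.
Proof. by move=> ?; apply: endoP => v /=; rewrite addNr. Qed.
Fact endo_mulA : associative endo_mul. Proof. by move=> ? ? ?; apply: endoP. Qed.
Fact endo_mul1 : left_id endo1 endo_mul. Proof. by move=> ?; apply: endoP. Qed.
Fact endo_mulr1 : right_id endo1 endo_mul. Proof. by move=> ?; apply: endoP. Qed.
Fact endo_mulDl : left_distributive endo_mul endo_add.
Proof. by move=> ? ? ?; apply: endoP. Qed.
Fact endo_mulDr : right_distributive endo_mul endo_add.
Proof. by move=> ? ? ?; apply: endoP => v /=; rewrite linearD. Qed.

HB.instance Definition _ := GRing.isNzRing.Build endo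
  endo_addA endo_addC endo_add0 endo_addN endo_mulA endo_mul1 endo_mulr1
  endo_mulDl endo_mulDr endo1_neq0.

Fact endo_scaleA a b (e : endo) : endo_scale a (endo_scale b e) = endo_scale (a * b) e.
Proof. by apply: endoP => v /=; rewrite scalerA. Qed.
Fact endo_scale1 : left_id 1 endo_scale.
Proof. by move=> ?; apply: endoP => v /=; rewrite scale1r. Qed.
Fact endo_scaleDr : right_distributive endo_scale +%R.
Proof. by move=> ? ? ?; apply: endoP => v /=; rewrite scalerDr. Qed.
Fact endo_scaleDl (e : endo) : {morph endo_scale^~ e : a b / a + b}.
Proof. by move=> ? ?; apply: endoP => v /=; rewrite scalerDl. Qed.

HB.instance Definition _ := GRing.Zmodule_isLmodule.Build K endo
  endo_scaleA endo_scale1 endo_scaleDr endo_scaleDl.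

Fact endo_scaleAl (k : K) (e1 e2 : endo) : k *: (e1 * e2) = (k *: e1) * e2.
Proof. by apply: endoP. Qed.
HB.instance Definition _ := GRing.Lmodule_isLalgebra.Build K endo endo_scaleAl.
Fact endo_scaleAr (k : K) (e1 e2 : endo) : k *: (e1 * e2) = e1 * (k *: e2).
Proof. by apply: endoP => v /=; rewrite linearZ. Qed.
HB.instance Definition _ := GRing.Lalgebra_isAlgebra.Build K endo endo_scaleAr.

Lemma endo_expE (e : endo) m v : (e ^+ m) v = iter m e v.
Proof. by elim: m => //= m IH; rewrite exprS -IH. Qed.

End Endomorphisms.

Section SubalgebraType.
Variables (K : pzRingType) (A : algType K) (S : subalgClosed A).

Definition subalg_type : Type := {u : A | u \in S}.

HB.instance Definition _ := [isSub of subalg_type for @sval A (fun u => u \in S)].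
HB.instance Definition _ := [Choice of subalg_type by <:].
HB.instance Definition _ := [SubChoice_isSubAlgebra of subalg_type by <:].

End SubalgebraType.

Lemma iter_commute (T : Type) (f g : T -> T) m x :
  (forall y, f (g y) = g (f y)) -> iter m f (g x) = g (iter m f x).
Proof. by move=> fg; elim: m => //= m ->; rewrite fg. Qed.

(* The induction runs on the sum over i of the nilpotency index of x under tau i. *)
Lemma commuting_nilpotent_ind (T : Type) (I : finType) (tau : I -> T -> T) (z : T)
    (P : T -> Prop) :
  (forall i, tau i z = z) -> (forall i j x, tau i (tau j x) = tau j (tau i x)) ->
  (forall i x, exists m, iter m (tau i) x = z) ->
  P z -> (forall x, (forall i, P (tau i x)) -> P x) -> forall x, P x.
Proof.
move=> tau_z tau_comm tau_nil Pz Pstep x.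
suff Pbound N y (c : I -> nat) :
    (forall i, iter (c i) (tau i) y = z) -> (\sum_i c i <= N)%N -> P y.
  by have [c xc] := fin_all_exists (tau_nil^~ x); apply: Pbound xc (leqnn _).
elim: N y c => [|N IH] y c yc cN; apply: Pstep => j.
all: case cj: (c j) => [|m]; first by move: (yc j); rewrite cj /= => ->; rewrite tau_z.
  by move: cN; rewrite (bigD1 j) //= cj.
apply: (IH _ (fun i => if i == j then m else c i)).
  move=> i; case: eqP => [->|/eqP ij]; first by rewrite -iterSr -cj.
  by rewrite iter_commute ?yc ?tau_z // => y'; rewrite tau_comm.
rewrite (bigD1 j) //= eqxx (eq_bigr c) => [|i /negbTE -> //].
by move: cN; rewrite (bigD1 j) //= cj.
Qed.

Lemma iter_can (T : Type) (f g : T -> T) m : cancel g f -> cancel (iter m g) (iter m f).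
Proof. by move=> gK; elim: m => // m IH x; rewrite iterSr /= gK IH. Qed.

Lemma commute_can (T : Type) (f g h : T -> T) :
  cancel f g -> cancel g f -> (forall x, f (h x) = h (f x)) ->
  forall x, g (h x) = h (g x).
Proof. by move=> fK gK fh x; rewrite -{1}(gK x) -fh fK. Qed.

Section Adjoint.
Variable R : nzRingType.
Implicit Types z u v : R.

Lemma ad_comm z u : z * u = u * z -> ad z u = 0.
Proof. by move=> zu; rewrite /ad zu subrr. Qed.

Lemma ad0 z : ad z 0 = 0. Proof. by rewrite ad_comm ?mulr0 ?mul0r. Qed.

Lemma adD z u v : ad z (u + v) = ad z u + ad z v.
Proof. by rewrite /ad mulrDr mulrDl opprD addrACA. Qed.

Lemma adM z u v : ad z (u * v) = ad z u * v + u * ad z v.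
Proof. by rewrite /ad mulrBl mulrBr !mulrA addrA subrK. Qed.

End Adjoint.

Section AdWords.
Variables (R : nzRingType) (I : Type) (Z : I -> R).

Definition ad_word (s : seq I) (f : R) : R := foldr (fun j g => ad (Z j) g) f s.

Lemma ad_word0 s : ad_word s 0 = 0.
Proof. by elim: s => //= j s IH; rewrite IH ad0. Qed.

Lemma ad_wordD s u v : ad_word s (u + v) = ad_word s u + ad_word s v.
Proof. by elim: s => //= j s IH; rewrite IH adD. Qed.

Lemma ad_word_cons j s f : ad_word (j :: s) f = ad (Z j) (ad_word s f).
Proof. by []. Qed.

Lemma ad_word_cat s t f : ad_word (s ++ t) f = ad_word s (ad_word t f).
Proof. exact: foldr_cat. Qed.

Lemma ad_word_rcons s j f : ad_word (rcons s j) f = ad_word s (ad (Z j) f).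
Proof. by rewrite -cats1 ad_word_cat. Qed.

Definition ad_vanish (N : nat) (f : R) : Prop :=
  forall s, (N <= size s)%N -> ad_word s f = 0.

Definition ad_nilpotent (f : R) : Prop := exists N, ad_vanish N f.

Lemma ad_vanish0_eq0 f : ad_vanish 0 f -> f = 0.
Proof. by move=> /(_ [::]); apply. Qed.

Lemma ad_vanishW M N f : (M <= N)%N -> ad_vanish M f -> ad_vanish N f.
Proof. by move=> MN fM s Ns; apply/fM/(leq_trans MN). Qed.

Lemma ad_vanishS N f : ad_vanish N.+1 f <-> forall j, ad_vanish N (ad (Z j) f).
Proof.
split=> [fN j s Ns|fN]; first by rewrite -ad_word_rcons fN ?size_rcons.
by case/lastP=> [//|s j]; rewrite size_rcons ad_word_rcons; apply: fN.
Qed.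

Lemma ad_vanish_central f : (forall j, Z j * f = f * Z j) -> ad_vanish 1 f.
Proof. by move=> fZ; apply/ad_vanishS => j s _; rewrite ad_comm ?ad_word0. Qed.

Lemma ad_vanishD M N u v :
  ad_vanish M u -> ad_vanish N v -> ad_vanish (maxn M N) (u + v).
Proof.
move=> uM vN s MNs; rewrite ad_wordD (uM s) ?(vN s) ?addr0 //;
  by apply: leq_trans MNs; rewrite ?leq_maxl ?leq_maxr.
Qed.

(* Leibniz rule: each letter of a word hits either the left or the right factor. *)
Lemma ad_vanishM M N u v :
  ad_vanish M u -> ad_vanish N v -> ad_vanish (M + N) (u * v).
Proof.
move=> uM vN s; elim/last_ind: s => [|s j IH] in M N u v uM vN *.
  rewrite leqn0 addn_eq0 => /andP[/eqP M0 _]; move: uM.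
  by rewrite M0 => /ad_vanish0_eq0 ->; rewrite mul0r.
case: M uM => [/ad_vanish0_eq0 -> _|M uM]; first by rewrite mul0r ad_word0.
case: N vN => [/ad_vanish0_eq0 -> _|N vN]; first by rewrite mulr0 ad_word0.
rewrite size_rcons addSn ltnS ad_word_rcons adM ad_wordD => MNs.
have uj := (ad_vanishS M u).1 uM j; have vj := (ad_vanishS N v).1 vN j.
by rewrite (IH M N.+1) ?(IH M.+1 N) ?addr0 // addSn -addnS.
Qed.

End AdWords.

Lemma ad_nilpotent_ad (R : nzRingType) (I : finType) (Z : I -> R) f :
  (forall j, ad_nilpotent Z (ad (Z j) f)) -> ad_nilpotent Z f.
Proof.
move=> /fin_all_exists[N fN]; exists (\max_j N j).+1.
by apply/ad_vanishS => j; apply: ad_vanishW (fN j); apply: leq_bigmax.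
Qed.

Lemma ad_locally_nilpotentP (R : nzRingType) n (Z : 'I_n -> R) :
  ad_locally_nilpotent Z <-> forall f, ad_nilpotent Z f.
Proof.
split=> [Znil f|Znil f]; last first.
  have [N fN] := Znil f; exists N.+1; split=> // s sN.
  by apply: fN; rewrite sN.
have [N [_ fN]] := Znil f; exists N => s Ns.
rewrite -(cat_take_drop (size s - N) s) ad_word_cat.
by rewrite [ad_word _ (drop _ _) f]fN ?ad_word0 // size_drop subKn.
Qed.

Section AdNilpotentSubalgebra.
Variables (K : pzRingType) (A : algType K) (I : Type) (Z : I -> A).

Lemma adZ (z : A) (k : K) (u : A) : ad z (k *: u) = k *: ad z u.
Proof. by rewrite /ad scalerBr -scalerAl -scalerAr. Qed.

Lemma ad_wordZ s k u : ad_word Z s (k *: u) = k *: ad_word Z s u.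
Proof. by elim: s => //= j s IH; rewrite IH adZ. Qed.

Definition ad_nilpotent_pred : {pred A} := fun f => `[< ad_nilpotent Z f >].

Lemma ad_nilpotent_predP f : reflect (ad_nilpotent Z f) (f \in ad_nilpotent_pred).
Proof. exact: asboolP. Qed.

Fact ad_nilpotent_subalg_closed : GRing.subsemialg_closed ad_nilpotent_pred.
Proof.
split.
- apply/ad_nilpotent_predP; exists 1%N.
  by apply: ad_vanish_central => j; rewrite mulr1 mul1r.
- split; first by apply/ad_nilpotent_predP; exists 0%N => s _; rewrite ad_word0.
  move=> u v /ad_nilpotent_predP[M uM] /ad_nilpotent_predP[N vN].
  by apply/ad_nilpotent_predP; exists (maxn M N); apply: ad_vanishD.
- move=> k u /ad_nilpotent_predP[N uN]; apply/ad_nilpotent_predP.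
  by exists N => s Ns; rewrite ad_wordZ uN ?scaler0.
- move=> u v /ad_nilpotent_predP[M uM] /ad_nilpotent_predP[N vN].
  by apply/ad_nilpotent_predP; exists (M + N)%N; apply: ad_vanishM.
Qed.

HB.instance Definition _ :=
  GRing.isSubalgClosed.Build K A ad_nilpotent_pred ad_nilpotent_subalg_closed.

End AdNilpotentSubalgebra.

Section GWAData.
Variables (K : fieldType) (D : algType K) (n : nat).
Variables (sigma sigmainv : 'I_n -> D -> D) (a : 'I_n -> D).
Hypothesis data : gwa_data sigma sigmainv a.

Lemma sigma_hom i : is_alg_hom (sigma i). Proof. by case: data. Qed.
Lemma sigmaK i : cancel (sigma i) (sigmainv i).
Proof. by case: data => _ /(_ i)[]. Qed.
Lemma sigmainvK i : cancel (sigmainv i) (sigma i).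
Proof. by case: data => _ /(_ i)[]. Qed.
Lemma sigmaC i j d : sigma i (sigma j d) = sigma j (sigma i d).
Proof. by case: data. Qed.
Lemma a_central i d : a i * d = d * a i. Proof. by case: data. Qed.
Lemma sigma_a i j : i != j -> sigma i (a j) = a j.
Proof. by case: data => _ _ _ _; apply. Qed.

Lemma sigmainv_hom i : is_alg_hom (sigmainv i).
Proof. exact: alg_hom_can (sigma_hom i) (sigmaK i) (sigmainvK i). Qed.
Lemma sigma_sigmainvC i j d : sigma i (sigmainv j d) = sigmainv j (sigma i d).
Proof. by apply/esym/(commute_can (sigmaK j) (sigmainvK j)) => e; rewrite sigmaC. Qed.
Lemma sigmainvC i j d : sigmainv i (sigmainv j d) = sigmainv j (sigmainv i d).
Proof.
by apply: (commute_can (sigmaK i) (sigmainvK i)) => e; rewrite -sigma_sigmainvC.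
Qed.
Lemma sigmainv_a i j : i != j -> sigmainv i (a j) = a j.
Proof. by move=> ij; rewrite -{1}(sigma_a ij) sigmaK. Qed.

Lemma gwa_data_inv : gwa_data sigmainv sigma (fun i => sigma i (a i)).
Proof.
split=> [i|i|i j d|i d|i j ij]; first exact: sigmainv_hom.
- by split; [apply: sigmainvK | apply: sigmaK].
- exact: sigmainvC.
- by rewrite -(sigmainvK i d) -!(alg_homM (sigma_hom i)) a_central.
- by rewrite -sigma_sigmainvC sigmainv_a.
Qed.

Lemma gwa_relations_inv (B : algType K) (phi : D -> B) (x y : 'I_n -> B) :
  gwa_relations sigma sigmainv a phi x y <->
  gwa_relations sigmainv sigma (fun i => sigma i (a i)) phi y x.
Proof.
split=> -[phi_hom [r1 r2 r3 r4 r5]]; split=> //; split=> // [i|i j ij].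
- by rewrite sigmaK.
- by move: (r5 j i); rewrite eq_sym => /(_ ij)[].
- by rewrite r2 sigmaK.
- by move: (r5 j i); rewrite eq_sym => /(_ ij)[].
Qed.

Lemma is_GWA_inv (A : algType K) (iota : D -> A) (X Y : 'I_n -> A) :
  is_GWA sigma sigmainv a iota X Y ->
  is_GWA sigmainv sigma (fun i => sigma i (a i)) iota Y X.
Proof.
case=> /gwa_relations_inv rel univ; split=> // B phi x y /gwa_relations_inv rel'.
have [[f [? ? ? ?]] uniq] := univ B phi y x rel'.
by split=> [|f1 f2 *]; [exists f | apply: uniq].
Qed.

Lemma gwa_relations_inj (B B' : algType K) (h : B' -> B) (phi : D -> B')
    (x y : 'I_n -> B') :
  is_alg_hom h -> injective h ->
  gwa_relations sigma sigmainv a (h \o phi) (h \o x) (h \o y) ->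
  gwa_relations sigma sigmainv a phi x y.
Proof.
move=> h_hom h_inj [[phiD phiM phi1 phiZ] [r1 r2 r3 r4 r5]].
have hE := (alg_homD h_hom, alg_homM h_hom, alg_hom1 h_hom, alg_homZ h_hom).
split.
  split=> *; apply: h_inj; rewrite ?hE;
  by [exact: phiD|exact: phiM|exact: phi1|exact: phiZ].
split=> [i|i|i d|i d|i j ij]; try (apply: h_inj; rewrite ?hE).
- exact: r1.
- exact: r2.
- exact: r3.
- exact: r4.
by have [? ? ?] := r5 i j ij; split; apply: h_inj; rewrite !hE.
Qed.

Lemma is_GWA_subalg_ind (A : algType K) (iota : D -> A) (X Y : 'I_n -> A)
    (S : subalgClosed A) :
  is_GWA sigma sigmainv a iota X Y ->
  (forall d, iota d \in S) -> (forall i, X i \in S) -> (forall i, Y i \in S) ->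
  forall u, u \in S.
Proof.
move=> [rel univ] S_iota S_X S_Y u.
pose iotaS d : subalg_type S := Sub (iota d) (S_iota d).
pose XS i : subalg_type S := Sub (X i) (S_X i).
pose YS i : subalg_type S := Sub (Y i) (S_Y i).
have val_hom : is_alg_hom (val : subalg_type S -> A).
  by split=> *; rewrite ?rmorphD ?rmorphM ?rmorph1 ?linearZ.
have relS : gwa_relations sigma sigmainv a iotaS XS YS :=
  gwa_relations_inj (phi := iotaS) (x := XS) (y := YS) val_hom val_inj rel.
have [[f [f_hom f_iota f_X f_Y]] _] := univ _ _ _ _ relS.
have [_ uniq] := univ _ _ _ _ rel.
have valfE : forall v, val (f v) = v.
  apply: (uniq _ id (alg_hom_comp val_hom f_hom)) => // * /=;
  by rewrite ?f_iota ?f_X ?f_Y.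
by rewrite -(valfE u); apply: valP.
Qed.

Definition tau i d := sigma i d - d.

Lemma tau0 i : tau i 0 = 0.
Proof. by rewrite /tau (alg_hom0 (sigma_hom i)) subrr. Qed.

Lemma tauC i j d : tau i (tau j d) = tau j (tau i d).
Proof.
rewrite /tau !(alg_homB (sigma_hom _)) sigmaC !opprB addrACA [in RHS]addrACA.
by rewrite [- _ + - _]addrC.
Qed.

Lemma lmul_linear (d : D) : linear (fun v => d * v).
Proof. by move=> k u v; rewrite mulrDr scalerAr. Qed.

Definition lmul (d : D) : endo D := Endo (lmul_linear d).
Definition sigma_endo i : endo D := Endo (alg_hom_linear (sigma_hom i)).
Definition sigmainv_endo i : endo D := Endo (alg_hom_linear (sigmainv_hom i)).

Lemma gwa_relations_regular :
  gwa_relations sigma sigmainv a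
    lmul sigma_endo (fun i => lmul (a i) * sigmainv_endo i).
Proof.
split; first split=> [d e|d e||k d]; try apply: endoP => v /=.
- by rewrite mulrDl.
- by rewrite mulrA.
- by rewrite mul1r.
- by rewrite scalerAl.
split=> [i|i|i d|i d|i j ij]; try apply: endoP => v /=.
- by rewrite sigmaK.
- by rewrite (alg_homM (sigma_hom i)) sigmainvK.
- by rewrite (alg_homM (sigma_hom i)).
- by rewrite (alg_homM (sigmainv_hom i)) !mulrA a_central.
split; apply: endoP => v /=; first exact: sigmaC.
  by rewrite (alg_homM (sigma_hom i)) sigma_a // sigma_sigmainvC.
rewrite !(alg_homM (sigmainv_hom _)) sigmainv_a // sigmainv_a 1?eq_sym //.
by rewrite sigmainvC !mulrA a_central.
Qed.

Lemma gwa_iota_mulX_eq0 (A : algType K) (iota : D -> A) (X Y : 'I_n -> A) i m d :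
  is_GWA sigma sigmainv a iota X Y -> iota d * X i ^+ m = 0 -> d = 0.
Proof.
case=> _ /(_ _ _ _ _ gwa_relations_regular) [[f [f_hom f_iota f_X _]] _].
move=> /(congr1 f); rewrite (alg_hom0 f_hom) (alg_homM f_hom) (alg_homX f_hom).
rewrite f_iota f_X.
move=> /(congr1 (fun e : endo D => e (iter m (sigmainv i) 1))) /=.
by rewrite endo_expE iter_can ?mulr1 //; apply: sigmainvK.
Qed.

Section Relations.
Variables (A : algType K) (iota : D -> A) (X Y : 'I_n -> A).
Hypothesis rel : gwa_relations sigma sigmainv a iota X Y.

Lemma iota_hom : is_alg_hom iota. Proof. by case: rel. Qed.

Lemma ad_X_iota j d : ad (X j) (iota d) = iota (tau j d) * X j.
Proof.
by case: rel => _ [_ _ Xiota _ _]; rewrite /ad Xiota -mulrBl (alg_homB iota_hom).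
Qed.

Lemma ad_word_X_iota i m d :
  ad_word X (nseq m i) (iota d) = iota (iter m (tau i) d) * X i ^+ m.
Proof.
elim: m => [|m IH]; first by rewrite mulr1.
rewrite ad_word_cons IH adM ad_X_iota [ad _ (_ ^+ _)]ad_comm;
  last by rewrite -exprS exprSr.
by rewrite mulr0 addr0 -mulrA -exprS.
Qed.

Lemma ad_vanish_X j : ad_vanish X 1 (X j).
Proof.
apply: ad_vanish_central => i; have [-> // | ij] := eqVneq i j.
by case: rel => _ [_ _ _ _ /(_ i j ij)[]].
Qed.

Hypothesis tau_nil : forall i, locally_nilpotent_map (tau i).

Lemma ad_nilpotent_iota d : ad_nilpotent X (iota d).
Proof.
move: d; apply: (commuting_nilpotent_ind tau0 tauC tau_nil) => [|e IH].
  by rewrite (alg_hom0 iota_hom); exists 0%N => s _; rewrite ad_word0.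
apply: ad_nilpotent_ad => j; rewrite ad_X_iota.
have [M eM] := IH j.
by exists (M + 1)%N; apply: ad_vanishM eM (ad_vanish_X j).
Qed.

Lemma ad_nilpotent_Y j : ad_nilpotent X (Y j).
Proof.
apply: ad_nilpotent_ad => i; have [<- | ij] := eqVneq i j.
  case: rel => _ [YX XY _ _ _]; rewrite /ad XY YX -(alg_homB iota_hom).
  exact: ad_nilpotent_iota.
case: rel => _ [_ _ _ _ /(_ i j ij)[_ XY _]].
by rewrite ad_comm //; exists 0%N => s _; rewrite ad_word0.
Qed.

End Relations.

Lemma ad_locally_nilpotent_GWA (A : algType K) (iota : D -> A) (X Y : 'I_n -> A) :
  is_GWA sigma sigmainv a iota X Y ->
  ad_locally_nilpotent X <-> forall i, locally_nilpotent_map (tau i).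
Proof.
move=> gwaA; have rel : gwa_relations sigma sigmainv a iota X Y by case: gwaA.
split=> [Xnil i d | tau_nil].
  have [N [_ dN]] := Xnil (iota d); exists N.
  apply: (gwa_iota_mulX_eq0 (i := i) (m := N) gwaA).
  by rewrite -(ad_word_X_iota rel); apply: dN; rewrite size_nseq.
apply/ad_locally_nilpotentP => u; apply/ad_nilpotent_predP.
apply: (is_GWA_subalg_ind (S := ad_nilpotent_pred X) gwaA) => [d|i|i];
  apply/ad_nilpotent_predP.
- exact: ad_nilpotent_iota rel tau_nil d.
- by exists 1%N; apply: ad_vanish_X rel i.
- exact: ad_nilpotent_Y rel tau_nil i.
Qed.

End GWAData.

Theorem lemma2p3 (K : fieldType) (D : algType K) (n : nat)
  (sigma sigmainv : 'I_n -> D -> D) (a : 'I_n -> D)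
  (A : algType K) (iota : D -> A) (X Y : 'I_n -> A) :
  gwa_data sigma sigmainv a ->
  is_GWA sigma sigmainv a iota X Y ->
  (ad_locally_nilpotent X <->
     (forall i, locally_nilpotent_map (fun d => sigma i d - d))) /\
  (ad_locally_nilpotent Y <->
     (forall i, locally_nilpotent_map (fun d => sigmainv i d - d))).
Proof.
move=> data gwaA; split; first exact (ad_locally_nilpotent_GWA data gwaA).
exact (ad_locally_nilpotent_GWA (gwa_data_inv data) (is_GWA_inv data gwaA)).
Qed.
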